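(* Let $F(x,\theta,\xi)$ be a model with parameter blocks $\theta=(\theta_0,\dots,\theta_L)$ and $\xi=(\xi_0,\dots,\xi_{L-1})$ such that $F(x,\theta,\xi)\in\{-1,+1\}$ for all $x\in\mathcal{X}$. Suppose there exist $a_0,\dots,a_L,b_0,\dots,b_{L-1}>0$ such that whenever $\|\hat\theta_i-\theta_i\|_2\le a_i$ for all $i$ and $\|\hat\xi_i-\xi_i\|_2\le b_i$ for all $i$, we have $|F(x,\theta,\xi)-F(x,\hat\theta,\hat\xi)|<1$ for all $x\in\mathcal{X}$. Then for all $x\in\mathcal{X}$, $m_F((\theta,\xi),x,\mathbf{1}(F(x,\theta,\xi)\ge0))\ge\min\{a_0,\dots,a_L,b_0,\dots,b_{L-1}\}$. The same lower bound holds for $m_{F'}(\theta',x,\mathbf{1}(F'(x,\theta')\ge0))$ for any layer-based weight-shared model $F'(x,\theta')=F(x,\tau^{(1)}(\theta'),\tau^{(2)}(\theta'))$ with $\tau^{(1)}(\theta')=\theta$, $\tau^{(2)}(\theta')=\xi$.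
   Context: All-layer margin of an architecture $F$ with parameter vector $\vartheta$: $m_F(\vartheta,x,y)=\min\{\|\delta\|_2:(y-0.5)F(x,\vartheta+\delta)\le0\}$ for $y\in\{0,1\}$. Layer-based weight sharing: $\theta'\in\mathbb{R}^{d'}$, and each component map $\tau^{(1)}_i$ (producing $\theta_i$) and $\tau^{(2)}_i$ (producing $\xi_i$) has the form $\theta'\mapsto(\theta'_{\pi_1},\dots,\theta'_{\pi_{b}})$ for distinct indices $\pi_1,\dots,\pi_b\in[d']$ (no coordinate of $\theta'$ is duplicated within one layer). *)

From HB Require Import structures.
From mathcomp Require Import all_boot all_order all_algebra.
From mathcomp Require Import all_classical all_reals ereal.
Set Implicit Arguments. Unset Strict Implicit. Unset Printing Implicit Defensive.
Import Order.TTheory GRing.Theory Num.Theory.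
Local Open Scope ring_scope.
Local Open Scope classical_set_scope.

Definition l2norm (R : realType) (n : nat) (v : 'rV[R]_n) : R :=
  Num.sqrt (\sum_(j < n) v ord0 j ^+ 2).

(* All-layer margin of a model G : X -> P -> R at parameter v, for label y,
   where the parameter space P has addition [add] and norm [nrm]:
   m_G(v,x,y) = inf { ||delta|| : (y - 1/2) G(x, v + delta) <= 0 }
   (the "min" of the paper, taken as an infimum in the extended reals,
   = +oo when the set is empty). *)
Definition all_layer_margin (R : realType) (X P : Type)
  (add : P -> P -> P) (nrm : P -> R) (G : X -> P -> R) (v : P) (x : X) (y : R)
  : \bar R :=
  ereal_inf [set (nrm d)%:E | d in [set d | (y - 2^-1) * G x (add v d) <= 0]].

Definition blockparams (R : realType) (L : nat) (p : 'I_L.+1 -> nat)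
  (q : 'I_L -> nat) : Type :=
  ((forall i : 'I_L.+1, 'rV[R]_(p i)) * (forall i : 'I_L, 'rV[R]_(q i)))%type.

Definition bp_add (R : realType) (L : nat) (p : 'I_L.+1 -> nat) (q : 'I_L -> nat)
  (u v : blockparams R p q) : blockparams R p q :=
  (fun i => u.1 i + v.1 i, fun i => u.2 i + v.2 i).

Definition bp_norm (R : realType) (L : nat) (p : 'I_L.+1 -> nat) (q : 'I_L -> nat)
  (u : blockparams R p q) : R :=
  Num.sqrt (\sum_(i < L.+1) \sum_(j < p i) u.1 i ord0 j ^+ 2
          + \sum_(i < L) \sum_(j < q i) u.2 i ord0 j ^+ 2).

(* Layer-based weight sharing: a block map selecting coordinates
   theta' |-> (theta'_{pi 1}, ..., theta'_{pi b}). *)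
Definition select_coords (R : realType) (d b : nat) (pi : 'I_b -> 'I_d)
  (v : 'rV[R]_d) : 'rV[R]_b := \row_(j < b) v ord0 (pi j).

Definition label01 (R : realType) (t : R) : R := if 0 <= t then 1 else 0.

From HB Require Import structures.
From mathcomp Require Import all_boot all_order all_algebra.
From mathcomp Require Import all_classical all_reals ereal.
Import Order.TTheory GRing.Theory Num.Theory.
Local Open Scope ring_scope.

(* Since F takes values in
   {-1, +1}, moving to the wrong side changes the output by at least 1.  Hence
   the margin is at least c as soon as every perturbation of norm < c changes
   the output by less than 1 (lemma [margin_lower_bound]).
   For the block model, a perturbation of total norm < c = min(a, b) perturbs
   every block by at most its norm ([l2norm_block_theta], [l2norm_block_xi]),
   hence by less than a_i resp. b_i, so the hypothesis applies.  For a
   layer-based weight-shared model, every block is a coordinate selection of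
   the shared vector; selecting distinct coordinates is additive and does not
   increase the l2 norm ([select_coordsD], [l2norm_select]), so again each
   block moves by less than its radius. *)

Lemma label_flip_far {R : realType} {y G : R} :
  (y = 1 \/ y = -1) -> (label01 y - 2^-1) * G <= 0 -> 1 <= `|y - G|.
Proof.
have half_lt1 : (2^-1 : R) < 1 by rewrite invf_lt1 ?ltr1n.
case=> ->; rewrite /label01.
- rewrite ler01 pmulr_rle0 ?subr_gt0 // => G_le0.
  by rewrite ger0_norm ?subr_ge0 ?(le_trans G_le0) // lerDl oppr_ge0.
- rewrite (lt_geF (ltrN10 R)) sub0r nmulr_rle0 ?oppr_lt0 ?invr_gt0 // => G_ge0.
  by rewrite ler0_norm ?subr_le0 ?(le_trans _ G_ge0) ?lerN10 // opprB opprK lerDr.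
Qed.

Lemma margin_lower_bound (R : realType) (X P : Type) (add : P -> P -> P)
    (nrm : P -> R) (G : X -> P -> R) (v : P) (x : X) (c : R) :
  (G x v = 1 \/ G x v = -1) ->
  (forall d, nrm d < c -> `|G x v - G x (add v d)| < 1) ->
  (c%:E <= all_layer_margin add nrm G v x (label01 (G x v)))%E.
Proof.
move=> G_pm1 robust; apply/ereal_infP => _ [d /= wrong_side <-].
rewrite lee_fin leNgt; apply/negP => /robust.
by rewrite ltNge (label_flip_far G_pm1 wrong_side).
Qed.

Lemma l2norm_block_theta {R : realType} {L : nat} {p : 'I_L.+1 -> nat}
    {q : 'I_L -> nat} (d : blockparams R p q) (i : 'I_L.+1) :
  l2norm (d.1 i) <= bp_norm d.
Proof.
rewrite ler_wsqrtr // -[leLHS]addr0; apply: lerD.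
- rewrite (bigD1 i) //= lerDl.
  by apply: sumr_ge0 => k _; apply: sumr_ge0 => j _; apply: sqr_ge0.
- by apply: sumr_ge0 => k _; apply: sumr_ge0 => j _; apply: sqr_ge0.
Qed.

Lemma l2norm_block_xi {R : realType} {L : nat} {p : 'I_L.+1 -> nat}
    {q : 'I_L -> nat} (d : blockparams R p q) (i : 'I_L) :
  l2norm (d.2 i) <= bp_norm d.
Proof.
rewrite ler_wsqrtr // -[leLHS]add0r; apply: lerD.
- by apply: sumr_ge0 => k _; apply: sumr_ge0 => j _; apply: sqr_ge0.
- rewrite (bigD1 i) //= lerDl.
  by apply: sumr_ge0 => k _; apply: sumr_ge0 => j _; apply: sqr_ge0.
Qed.

Lemma select_coordsD (R : realType) (d b : nat) (pi : 'I_b -> 'I_d)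
    (u v : 'rV[R]_d) :
  select_coords pi (u + v) = select_coords pi u + select_coords pi v.
Proof. by apply/rowP => j; rewrite !mxE. Qed.

(* Selecting distinct coordinates does not increase the l2 norm: the selected
   squares form a sub-sum of the full sum of squares. *)
Lemma l2norm_select {R : realType} {d b : nat} (pi : 'I_b -> 'I_d)
    (v : 'rV[R]_d) :
  injective pi -> l2norm (select_coords pi v) <= l2norm v.
Proof.
move=> pi_inj; rewrite /l2norm ler_wsqrtr //.
under eq_bigr => j _ do rewrite mxE.
rewrite -(big_imset (fun k => v ord0 k ^+ 2) (A := predT)) /=; last first.
  by move=> j k _ _; apply: pi_inj.
rewrite [leLHS]big_mkcond; apply: ler_sum => k _.
by case: (k \in _) => //; apply: sqr_ge0.
Qed.

Theorem mainTheorem12 (R : realType) (X : Type) (L : nat)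
  (p : 'I_L.+1 -> nat) (q : 'I_L -> nat)
  (F : X -> (forall i : 'I_L.+1, 'rV[R]_(p i)) -> (forall i : 'I_L, 'rV[R]_(q i)) -> R)
  (theta : forall i : 'I_L.+1, 'rV[R]_(p i)) (xi : forall i : 'I_L, 'rV[R]_(q i))
  (a : 'I_L.+1 -> R) (b : 'I_L -> R) :
  (forall x, F x theta xi = 1 \/ F x theta xi = -1) ->
  (forall i, 0 < a i) -> (forall i, 0 < b i) ->
  (forall (thetah : forall i : 'I_L.+1, 'rV[R]_(p i))
          (xih : forall i : 'I_L, 'rV[R]_(q i)),
     (forall i, l2norm (thetah i - theta i) <= a i) ->
     (forall i, l2norm (xih i - xi i) <= b i) ->
     forall x, `|F x theta xi - F x thetah xih| < 1) ->
  let c := Num.min (\big[Num.min/a ord0]_(i < L.+1) a i)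
                   (\big[Num.min/a ord0]_(i < L) b i) in
  (forall x : X,
     (c%:E <= all_layer_margin (@bp_add R L p q) (@bp_norm R L p q)
                (fun x (v : blockparams R p q) => F x v.1 v.2)
                (theta, xi) x (label01 (F x theta xi)))%E)
  /\
  (forall (d' : nat) (pi1 : forall i : 'I_L.+1, 'I_(p i) -> 'I_d')
          (pi2 : forall i : 'I_L, 'I_(q i) -> 'I_d') (theta' : 'rV[R]_d'),
     (forall i, injective (pi1 i)) -> (forall i, injective (pi2 i)) ->
     (forall i, select_coords (pi1 i) theta' = theta i) ->
     (forall i, select_coords (pi2 i) theta' = xi i) ->
     let F' := fun (x : X) (v : 'rV[R]_d') =>
       F x (fun i => select_coords (pi1 i) v) (fun i => select_coords (pi2 i) v) in
     forall x : X,
       (c%:E <= all_layer_margin (fun u v : 'rV[R]_d' => (u + v)%R) (@l2norm R d')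
                  F' theta' x (label01 (F' x theta')))%E).
Proof.
move=> F_pm1 _ _ robust c.
have c_le_a i : c <= a i by rewrite ge_min bigmin_le ?orbT.
have c_le_b i : c <= b i by rewrite ge_min bigmin_le ?orbT.
split=> [x | d' pi1 pi2 theta' pi1_inj pi2_inj sel_theta sel_xi F' x].
- apply: margin_lower_bound => // d d_small.
  apply: robust => i /=; rewrite addrC addKr; apply: ltW.
  + exact: le_lt_trans (l2norm_block_theta d i) (lt_le_trans d_small (c_le_a i)).
  + exact: le_lt_trans (l2norm_block_xi d i) (lt_le_trans d_small (c_le_b i)).
- have F'_theta' : F' x theta' = F x theta xi.
    by rewrite /F'; congr F; apply: functional_extensionality_dep.
  apply: margin_lower_bound; first by rewrite F'_theta'.
  move=> d d_small; rewrite F'_theta'; apply: robust => i.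
  + rewrite -sel_theta select_coordsD addrC addKr; apply: ltW.
    exact: le_lt_trans (l2norm_select _ _ (pi1_inj i)) (lt_le_trans d_small (c_le_a i)).
  + rewrite -sel_xi select_coordsD addrC addKr; apply: ltW.
    exact: le_lt_trans (l2norm_select _ _ (pi2_inj i)) (lt_le_trans d_small (c_le_b i)).
Qed.
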